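(* Given a schedule $\sigma$ of $n$ jobs on two machines and $k\ge1$, one run of the randomized $k$-swap algorithm terminates in $O(k\cdot n^{\lceil k/2\rceil}\cdot\log n)$ steps.
   Context: Problem $P2\|C_{\max}$: $n$ jobs with processing times $p_j>0$, two identical machines. A schedule $\sigma=(M_1,M_2)$ partitions the jobs; loads $L_i=\sum_{j\in M_i}p_j$, $\Delta=\max_iL_i-\min_iL_i$; label machines so that machine 1 has maximum load. Randomized $k$-swap algorithm: (1) assign each job independently and uniformly at random to $A$ or $B$; (2) for every $S_1\subseteq A$ with $|S_1|=\lceil k/2\rceil$ put $\sum_{j\in S_1\cap M_1}p_j-\sum_{j\in S_1\cap M_2}p_j$ (with reference to $S_1$) into $A_\Sigma$; (3) for every $S_2\subseteq B$ with $|S_2|=\lfloor k/2\rfloor$ put $\sum_{j\in S_2\cap M_1}p_j-\sum_{j\in S_2\cap M_2}p_j$ into $B_\Sigma$; (4) sort $B_\Sigma$ non-decreasingly; (5) for each $x\in A_\Sigma$ binary-search for $y\in B_\Sigma$ with $-x<y<\Delta-x$; if found, interchange the machine assignments of the jobs of the corresponding $S_1\cup S_2$ and return True; (6) otherwise return False. Steps are elementary operations (including arithmetic and comparisons on processing times) of unit cost. *)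

(* A cost-instrumented model of one run of the randomized
   k-swap algorithm for P2||Cmax.  Every function returns its result paired
   with the number of elementary (unit-cost) operations it performs:
   arithmetic operations / comparisons on processing times, comparisons and
   arithmetic on indices, branch decisions, coin flips, array accesses and
   construction of list cells.  Constant factors are immaterial. *)
From HB Require Import structures.
From mathcomp Require Import all_boot all_order all_algebra.
Set Implicit Arguments. Unset Strict Implicit. Unset Printing Implicit Defensive.
Import Order.TTheory GRing.Theory Num.Theory.

(* Jobs are the indices 0 .. n-1; [p j] is the processing time of job j,
   [sched j] tells on which machine (labelled true / false) job j is in sigma. *)

Fixpoint loads {R : realDomainType} (p : nat -> R) (sched : nat -> bool)
    (js : seq nat) : R * R * nat :=
  match js with
  | [::] => (0%R, 0%R, 0)
  | j :: js' =>
      let: (a, b, c) := loads p sched js' in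
      if sched j then ((a + p j)%R, b, c + 2) else (a, (b + p j)%R, c + 2)
  end.

Fixpoint choose (s : seq nat) (h : nat) {struct s} : seq (seq nat) * nat :=
  match h with
  | 0 => ([:: [::]], 1)
  | h'.+1 =>
      match s with
      | [::] => ([::], 1)
      | x :: s' =>
          let: (l1, c1) := choose s' h' in
          let: (l2, c2) := choose s' h in
          (map (cons x) l1 ++ l2, c1 + c2 + 2 * size l1 + 1)
      end
  end.

(* sum_{j in S} w j, where w j = p j if j on machine 1, - p j otherwise *)
Fixpoint signed_sum {R : realDomainType} (w : nat -> R) (U : seq nat) : R * nat :=
  match U with
  | [::] => (0%R, 1)
  | j :: U' => let: (v, c) := signed_sum w U' in ((w j + v)%R, c + 2)
  end.

(* the multiset A_Sigma / B_Sigma: values with reference to their subset *)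
Fixpoint weigh {R : realDomainType} (w : nat -> R) (ss : seq (seq nat))
    : seq (R * seq nat) * nat :=
  match ss with
  | [::] => ([::], 1)
  | T :: ss' =>
      let: (v, c) := signed_sum w T in
      let: (l, c') := weigh w ss' in
      ((v, T) :: l, c + c' + 1)
  end.

Fixpoint merge_c {R : realDomainType} {T : Type} (s1 : seq (R * T))
    : seq (R * T) -> seq (R * T) * nat :=
  if s1 is x1 :: s1' then
    let fix merge_s1 (s2 : seq (R * T)) :=
      if s2 is x2 :: s2' then
        if (x1.1 <= x2.1)%R then
          let: (r, c) := merge_c s1' s2 in (x1 :: r, c + 2)
        else
          let: (r, c) := merge_s1 s2' in (x2 :: r, c + 2)
      else (s1, 1) in
    merge_s1
  else fun s2 => (s2, 1).

Fixpoint split_c {A : Type} (s : seq A) : seq A * seq A * nat :=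
  match s with
  | x :: y :: s' => let: (a, b, c) := split_c s' in (x :: a, y :: b, c + 2)
  | _ => (s, [::], 1)
  end.

(* fuel = size of the list is always sufficient *)
Fixpoint msort_c {R : realDomainType} {T : Type} (fuel : nat) (s : seq (R * T))
    : seq (R * T) * nat :=
  match fuel with
  | 0 => (s, 1)
  | fuel'.+1 =>
      match s with
      | [::] => (s, 1)
      | [:: _] => (s, 1)
      | _ =>
          let: (a, b, c0) := split_c s in
          let: (a', c1) := msort_c fuel' a in
          let: (b', c2) := msort_c fuel' b in
          let: (r, c3) := merge_c a' b' in
          (r, c0 + c1 + c2 + c3 + 1)
      end
  end.

(* binary search in the sorted array b (random access of unit cost) for the
   first index in [lo, hi) whose value is > t; fuel = size b + 1 suffices. *)
Fixpoint bsearch {R : realDomainType} {T : Type} (b : seq (R * T)) (d : R * T)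
    (fuel : nat) (t : R) (lo hi : nat) : nat * nat :=
  match fuel with
  | 0 => (lo, 1)
  | f.+1 =>
      if lo < hi then
        let mid := (lo + hi)./2 in
        if (t < (nth d b mid).1)%R then
          let: (r, c) := bsearch b d f t lo mid in (r, c + 6)
        else
          let: (r, c) := bsearch b d f t mid.+1 hi in (r, c + 6)
      else (lo, 1)
  end.

Fixpoint search {R : realDomainType} (bS : seq (R * seq nat)) (Delta : R)
    (aS : seq (R * seq nat)) : option (seq nat * seq nat) * nat :=
  match aS with
  | [::] => (None, 1)
  | (x, S1) :: aS' =>
      let: (i, c) := bsearch bS (0%R, [::]) (size bS).+1 (- x)%R 0 (size bS) in
      if (i < size bS) && ((nth (0%R, [::]) bS i).1 < Delta - x)%R then
        (Some (S1, (nth (0%R, [::]) bS i).2), c + 5)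
      else
        let: (r, c') := search bS Delta aS' in (r, c + c' + 5)
  end.

(* One run of the randomized k-swap algorithm on the schedule [sched] of the
   jobs 0..n-1, with coin outcomes [rnd] (rnd j = true : job j put in A). *)
Definition kswap_run {R : realDomainType} (n k : nat) (p : nat -> R)
    (sched rnd : nat -> bool) : bool * (nat -> bool) * nat :=
  let: (a, b, c0) := loads p sched (iota 0 n) in
  (* relabel: the machine labelled [top] is machine 1 (maximum load) *)
  let top := (b <= a)%R in
  let Delta := if top then (a - b)%R else (b - a)%R in
  let w j := if sched j == top then p j else (- p j)%R in
  (* step (1): n coin flips and the construction of A and B *)
  let As := [seq j <- iota 0 n | rnd j] in
  let Bs := [seq j <- iota 0 n | ~~ rnd j] in
  let c1 := 2 * n in
  let: (ssA, c2) := choose As (uphalf k) in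
  let: (ssB, c3) := choose Bs k./2 in
  let: (aS, c4) := weigh w ssA in
  let: (bS0, c5) := weigh w ssB in
  let: (bS, c6) := msort_c (size bS0) bS0 in
  let: (res, c7) := search bS Delta aS in
  let cost0 := c0 + 2 + c1 + c2 + c3 + c4 + c5 + c6 + c7 in
  match res with
  | Some (S1, S2) =>
      (true, (fun j => if j \in S1 ++ S2 then ~~ sched j else sched j),
       cost0 + size S1 + size S2 + 1)
  | None => (false, sched, cost0 + 1)
  end.

From Pilot Require Import Defs.
From HB Require Import structures.
From mathcomp Require Import all_boot all_order all_algebra.
From mathcomp Require Import zify.
Set Implicit Arguments. Unset Strict Implicit. Unset Printing Implicit Defensive.

(* Computing the loads and splitting the jobs into A and B costs O(n).  The
   recursive enumeration of the h-subsets of a list s also enumerates smaller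
   subsets of its suffixes: it builds at most |s|^h lists and costs O(h) times
   the geometric sum 1 + |s| + ... + |s|^h, which is O(h n^h) for |s| <= n and
   n >= 2.  The signed sums cost O(k) per subset.  If
   |B_Sigma| <= n^(floor(k/2)) <= 2^e, merge sort costs O(e |B_Sigma|) and each
   of the |A_Sigma| <= n^(ceil(k/2)) binary searches costs O(e).  Since
   n < 2^(log n + 1), the choice e = (log n + 1) floor(k/2) = O(k log n) makes
   every phase O(k n^(ceil(k/2)) log n). *)

Lemma leq_exp2rW m n e : m <= n -> m ^ e <= n ^ e.
Proof. by case: e => // e; rewrite leq_exp2r. Qed.

Lemma loads_cost (R : realDomainType) (p : nat -> R) sched js :
  (loads p sched js).2 = 2 * size js.
Proof.
by elim: js => //= j js; case: loads => [[a b] c] /= ->; case: (sched j) => /=; lia.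
Qed.

Definition powsum m h := \sum_(i < h.+1) m ^ i.

Lemma powsumS m h : powsum m h.+1 = powsum m h + m ^ h.+1.
Proof. by rewrite /powsum big_ord_recr. Qed.

Lemma powsum_gt0 m h : 0 < powsum m h.
Proof. by rewrite /powsum big_ord_recl expn0. Qed.

Lemma powsum_ge_exp m h : m ^ h <= powsum m h.
Proof. by case: h => [|h]; rewrite ?powsumS ?leq_addl // /powsum big_ord1. Qed.

Lemma leq_powsum m m' h : m <= m' -> powsum m h <= powsum m' h.
Proof. by move=> le_mm'; apply: leq_sum => i _; apply: leq_exp2rW. Qed.

Lemma powsum_le m h : 1 < m -> powsum m h <= 2 * m ^ h.
Proof.
move=> m_gt1; elim: h => [|h IH]; first by rewrite /powsum big_ord1.
by rewrite powsumS expnS; nia.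
Qed.

Lemma powsum_pascal m h : powsum m h.+1 + powsum m h <= powsum m.+1 h.+1.
Proof.
rewrite /powsum (big_ord_recl h.+1) (big_ord_recl h.+1 (fun i => m.+1 ^ i)) /=.
rewrite -addnA leq_add2l -big_split /=; apply: leq_sum => i _.
by rewrite /bump /= add1n expnS (expnS m.+1) -mulSnr leq_mul2l leq_exp2rW.
Qed.

Lemma size_choose s h : size (Defs.choose s h).1 <= size s ^ h.
Proof.
elim: s h => [|x s IH] [|h] //=.
case: (Defs.choose s h) (IH h) => l1 c1.
case: (Defs.choose s h.+1) (IH h.+1) => l2 c2 /= le2 le1.
rewrite size_cat size_map [X in _ <= X]expnS mulSn.
apply: leq_add; first by rewrite (leq_trans le1) ?leq_exp2rW.
by rewrite (leq_trans le2) // expnS leq_mul2l leq_exp2rW ?orbT.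
Qed.

Lemma all_size_choose s h : all (fun T => size T == h) (Defs.choose s h).1.
Proof.
elim: s h => [|x s IH] [|h] //=.
case: (Defs.choose s h) (IH h) => l1 c1.
case: (Defs.choose s h.+1) (IH h.+1) => l2 c2 /= all2 all1.
by rewrite all_cat all2 andbT all_map.
Qed.

Lemma choose_cost s h : (Defs.choose s h).2 < 2 * h.+1 * powsum (size s) h.
Proof.
elim: s h => [|x s IH] [|h] /=.
- by rewrite /powsum big_ord1.
- by have := powsum_gt0 0 h.+1; lia.
- by rewrite /powsum big_ord1.
case: (Defs.choose s h) (IH h) (size_choose s h) => l1 c1.
case: (Defs.choose s h.+1) (IH h.+1) => l2 c2 /= lt2 lt1 le_l1.
have := powsum_pascal (size s) h; have := powsum_ge_exp (size s) h.
nia.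
Qed.

Lemma choose_cost_le s h m : size s <= m -> 1 < m ->
  (Defs.choose s h).2 <= 4 * h.+1 * m ^ h.
Proof.
move=> le_sm m_gt1.
have := leq_trans (leq_powsum h le_sm) (powsum_le h m_gt1).
have := choose_cost s h; nia.
Qed.

Section Weigh.
Variables (R : realDomainType) (w : nat -> R).

Lemma signed_sum_cost U : (signed_sum w U).2 = (2 * size U).+1.
Proof. by elim: U => //= j U; case: signed_sum => v c /= ->; lia. Qed.

Lemma weigh_unzip2 ss : unzip2 (weigh w ss).1 = ss.
Proof. by elim: ss => //= T ss; case: signed_sum => v c; case: weigh => l c' /= ->. Qed.

Lemma weigh_cost ss h : all (fun T => size T == h) ss ->
  (weigh w ss).2 = (size ss * (2 * h + 2)).+1.
Proof.
elim: ss => //= T ss IH /andP[/eqP size_T /IH].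
have := signed_sum_cost T; case: signed_sum => v c /= ->.
by case: weigh => l c' /= ->; rewrite size_T; lia.
Qed.

Lemma choose_weigh_spec s h m : size s <= m -> 1 < m ->
  let: (ss, c) := Defs.choose s h in
  let: (l, c') := weigh w ss in
  [/\ c <= 4 * h.+1 * m ^ h, c' <= (m ^ h * (2 * h + 2)).+1, size l <= m ^ h
    & all (fun T => size T == h) (unzip2 l)].
Proof.
move=> le_sm m_gt1; have le_ss := leq_trans (size_choose s h) (leq_exp2rW h le_sm).
case: (Defs.choose s h) (choose_cost_le h le_sm m_gt1) (all_size_choose s h) le_ss.
move=> ss c le_c all_ss le_ss.
case: (weigh w ss) (weigh_cost all_ss) (weigh_unzip2 ss) => l c' /= -> unzip_l.
have size_l : size l = size ss by rewrite -unzip_l size_map.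
by rewrite size_l unzip_l ltnS leq_mul2r le_ss orbT.
Qed.

End Weigh.

Section Sorting.
Variables (R : realDomainType) (T : eqType).
Implicit Types s : seq (R * T).

Lemma merge_c_cons x1 s1 x2 s2 : merge_c (x1 :: s1) (x2 :: s2) =
  if (x1.1 <= x2.1)%R then
    let: (r, c) := merge_c s1 (x2 :: s2) in (x1 :: r, c + 2)
  else
    let: (r, c) := merge_c (x1 :: s1) s2 in (x2 :: r, c + 2).
Proof. by []. Qed.

Lemma merge_c_perm s1 s2 : perm_eq (merge_c s1 s2).1 (s1 ++ s2).
Proof.
elim: s1 s2 => [|x1 s1 IH1] s2 //; elim: s2 => [|x2 s2 IH2]; first by rewrite cats0.
rewrite merge_c_cons; case: ifP => _.
  by case: (merge_c s1 (x2 :: s2)) (IH1 (x2 :: s2)) => r c /=; rewrite perm_cons.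
case: (merge_c (x1 :: s1) s2) IH2 => r c /= perm_r.
apply: perm_trans (_ : perm_eq _ ([:: x2] ++ (x1 :: s1) ++ s2)) _.
  by rewrite perm_cons perm_r.
by rewrite perm_catCA.
Qed.

Lemma merge_c_cost s1 s2 : (merge_c s1 s2).2 <= (2 * (size s1 + size s2)).+1.
Proof.
elim: s1 s2 => [|x1 s1 IH1] s2 //; elim: s2 => [|x2 s2 IH2]; first by rewrite /=; lia.
rewrite merge_c_cons; case: ifP => _.
  by case: (merge_c s1 (x2 :: s2)) (IH1 (x2 :: s2)) => r c /=; lia.
by case: (merge_c (x1 :: s1) s2) IH2 => r c /=; lia.
Qed.

Lemma split_c_spec s : let: (a, b, c) := split_c s in
  [/\ perm_eq (a ++ b) s, size a = uphalf (size s), size b = (size s)./2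
    & c = (2 * (size s)./2).+1].
Proof.
pose P s := let: (a, b, c) := split_c s in
  [/\ perm_eq (a ++ b) s, size a = uphalf (size s), size b = (size s)./2
    & c = (2 * (size s)./2).+1].
suff: P s /\ forall x, P (x :: s) by case.
elim: s => [|y s [IHs IHys]]; first by split=> [|x]; rewrite /P /= ?cats0.
split=> // x; move: IHs; rewrite /P /=.
case: (split_c s) => [[a b] c] [perm_ab size_a size_b ->] /=.
rewrite perm_cons -[y :: b]cat1s perm_catCA /= perm_cons size_a size_b.
by split=> //; rewrite addn2 mulnS.
Qed.

Lemma msort_c_unfold f s : 1 < size s -> msort_c f.+1 s =
  let: (a, b, c0) := split_c s in
  let: (a', c1) := msort_c f a in
  let: (b', c2) := msort_c f b in
  let: (r, c3) := merge_c a' b' in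
  (r, c0 + c1 + c2 + c3 + 1).
Proof. by case: s => [|x [|y s]]. Qed.

Lemma msort_c_small f s : size s <= 1 -> msort_c f s = (s, 1).
Proof. by case: f => [|f]; case: s => [|x [|y s]]. Qed.

Lemma msort_c_perm f s : perm_eq (msort_c f s).1 s.
Proof.
elim: f s => [|f IH] s //.
have [le_s1|lt1s] := leqP (size s) 1; first by rewrite msort_c_small.
rewrite msort_c_unfold //.
case: (split_c s) (split_c_spec s) => [[a b] c0] [perm_ab _ _ _].
case: (msort_c f a) (IH a) => a' c1 /= perm_a.
case: (msort_c f b) (IH b) => b' c2 /= perm_b.
case: (merge_c a' b') (merge_c_perm a' b') => r c3 /= perm_r.
by rewrite (perm_trans perm_r) // (perm_trans (perm_cat perm_a perm_b)).
Qed.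

Lemma msort_c_cost e f s : size s <= f -> size s <= 2 ^ e ->
  (msort_c f s).2 <= (6 * size s * e).+1.
Proof.
elim: e f s => [|e IH] f s le_sf le_se; first by rewrite msort_c_small.
have [le_s1|lt1s] := leqP (size s) 1; first by rewrite msort_c_small.
case: f le_sf => [|f] le_sf; first by lia.
rewrite msort_c_unfold // expnS in le_se *.
case: (split_c s) (split_c_spec s) => [[a b] c0] [perm_ab size_a size_b ->].
have sum_ab : size a + size b = size s by rewrite -size_cat (perm_size perm_ab).
have le_a : size a <= 2 ^ e by rewrite size_a leq_uphalf_double -mul2n.
have le_ba : size b <= size a by rewrite size_a size_b uphalf_half leq_addl.
have := IH f a ltac:(lia) le_a; have := IH f b ltac:(lia) (leq_trans le_ba le_a).
have := msort_c_perm f a; have := msort_c_perm f b.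
case: (msort_c f a) => a' c1; case: (msort_c f b) => b' c2 /= perm_b' perm_a' le_c2 le_c1.
have size_a' : size a' = size a := perm_size perm_a'.
have size_b' : size b' = size b := perm_size perm_b'.
case: (merge_c a' b') (merge_c_cost a' b') => r c3 /=.
rewrite size_a' size_b' -size_b => le_c3.
have : size a * e + size b * e = size s * e by rewrite -mulnDl sum_ab.
lia.
Qed.

End Sorting.

Lemma bsearch_cost (R : realDomainType) (T : Type) (b : seq (R * T)) d f t lo hi e :
  hi < lo + 2 ^ e -> (bsearch b d f t lo hi).2 <= (6 * e).+1.
Proof.
elim: e f lo hi => [|e IH] [|f] lo hi lt_e //=; case: ifP => // lt_lo_hi.
  by rewrite expn0 in lt_e; lia.
have := odd_double_half (lo + hi); rewrite expnS in lt_e => mid_eq.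
case: ifP => _.
  by have := IH f lo (lo + hi)./2 ltac:(lia); case: bsearch => r c /=; lia.
by have := IH f (lo + hi)./2.+1 hi ltac:(lia); case: bsearch => r c /=; lia.
Qed.

Section Search.
Variables (R : realDomainType) (bS : seq (R * seq nat)) (Delta : R).

Lemma search_cons x S1 aS : search bS Delta ((x, S1) :: aS) =
  let: (i, c) := bsearch bS (0%R, [::]) (size bS).+1 (- x)%R 0 (size bS) in
  if (i < size bS) && ((nth (0%R, [::]) bS i).1 < Delta - x)%R then
    (Some (S1, (nth (0%R, [::]) bS i).2), c + 5)
  else
    let: (r, c') := search bS Delta aS in (r, c + c' + 5).
Proof. by []. Qed.

Lemma search_cost aS e : size bS < 2 ^ e ->
  (search bS Delta aS).2 <= (size aS * (6 * e + 6)).+1.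
Proof.
move=> lt_e; elim: aS => [|[x S1] aS IH] //; rewrite search_cons.
have := bsearch_cost bS (0%R, [::]) (size bS).+1 (- x)%R (lo := 0) lt_e.
case: bsearch => i c /= le_c; case: ifP => _ /=; first by nia.
by case: search IH => r c' /=; nia.
Qed.

Lemma search_some aS S1 S2 : (search bS Delta aS).1 = Some (S1, S2) ->
  S1 \in unzip2 aS /\ S2 \in unzip2 bS.
Proof.
elim: aS => [|[x S1'] aS IH] //; rewrite search_cons.
case: bsearch => i c; case: ifP => [/andP[lt_i _] [<- <-]|_].
  by split; [exact: mem_head | exact/map_f/mem_nth].
by case: search IH => r c' /= IH /IH[S1_aS ->]; rewrite in_cons S1_aS orbT.
Qed.

End Search.

Lemma msort_search_spec (R : realDomainType) (aS bS0 : seq (R * seq nat)) Delta e M :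
  size aS <= M -> size bS0 <= M -> size bS0 <= 2 ^ e ->
  let: (bS, c) := msort_c (size bS0) bS0 in
  let: (res, c') := search bS Delta aS in
  [/\ c <= (6 * M * e).+1, c' <= (M * (6 * e + 12)).+1
    & forall S1 S2, res = Some (S1, S2) -> S1 \in unzip2 aS /\ S2 \in unzip2 bS0].
Proof.
move=> le_aM le_bM le_e; have := msort_c_perm (size bS0) bS0.
case: (msort_c (size bS0) bS0) (msort_c_cost (leqnn _) le_e) => bS c /= le_c perm_bS.
have size_bS : size bS < 2 ^ e.+1.
  by rewrite (perm_size perm_bS) (leq_ltn_trans le_e) // expnS ltn_Pmull ?expn_gt0.
have := @search_some _ bS Delta aS; have := search_cost Delta aS size_bS.
case: (search bS Delta aS) => res c' /= le_c' res_in; split=> [||S1 S2 /res_in[]].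
- by rewrite (leq_trans le_c) // ltnS leq_mul2r leq_mul2l le_bM !orbT.
- have -> : 6 * e + 12 = 6 * e.+1 + 6 by rewrite mulnS addnAC addnC.
  by rewrite (leq_trans le_c') // ltnS leq_mul2r le_aM orbT.
- by move=> S1_in; rewrite (perm_mem (perm_map snd perm_bS)) => S2_in.
Qed.

Lemma kswap_run_cost (R : realDomainType) n k (p : nat -> R) sched rnd e :
  1 < n -> 0 < k -> n ^ k./2 <= 2 ^ e ->
  (kswap_run n k p sched rnd).2 <= 50 * (k + e) * n ^ uphalf k.
Proof.
move=> n_gt1 k_gt0 le_e; rewrite /kswap_run.
case: loads (loads_cost p sched (iota 0 n)) => [[a b] c0] /= ->; rewrite size_iota.
set h1 := uphalf k; set h2 := k./2.
set Delta := if _ then _ else _; set w := fun j => if sched j == _ then _ else _.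
have size_filter_iota (P : pred nat) : size [seq j <- iota 0 n | P j] <= n.
  by rewrite size_filter (leq_trans (count_size _ _)) ?size_iota.
have sum_h : h1 + h2 = k by rewrite /h1 /h2 uphalf_half -addnA addnn odd_double_half.
have le_h : h2 <= h1 by rewrite /h1 /h2 uphalf_half leq_addl.
have le_nP : n <= n ^ h1 by rewrite -{1}(expn1 n) leq_pexp2l ?uphalf_gt0 // ltnW.
have le_QP : n ^ h2 <= n ^ h1 := leq_pexp2l (ltnW n_gt1) le_h.
case: Defs.choose (choose_weigh_spec w h1 (size_filter_iota rnd) n_gt1) => ssA c2.
case: weigh => aS c4 [le_c2 le_c4 size_aS all_aS].
case: Defs.choose (choose_weigh_spec w h2 (size_filter_iota (predC rnd)) n_gt1) => ssB c3.
case: weigh => bS0 c5 [le_c3 le_c5 size_bS0 all_bS0].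
have {}le_c3 : c3 <= 4 * h2.+1 * n ^ h1 := leq_trans le_c3 (leq_mul (leqnn _) le_QP).
have {}le_c5 : c5 <= (n ^ h1 * (2 * h2 + 2)).+1.
  by rewrite (leq_trans le_c5) // ltnS leq_mul2r le_QP orbT.
have le_bS0 := leq_trans size_bS0 le_QP.
case: msort_c (msort_search_spec Delta size_aS le_bS0 (leq_trans size_bS0 le_e)) => bS c6.
case: search => res c7 [le_c6 le_c7 res_in].
have swap_size S1 S2 : res = Some (S1, S2) -> size S1 + size S2 = k.
  by case/res_in=> /(allP all_aS)/eqP-> /(allP all_bS0)/eqP->.
have le_P : n ^ h1 <= h1 * n ^ h1 by rewrite leq_pmull // uphalf_gt0.
have le_k : k <= k * n ^ h1 by rewrite leq_pmulr ?expn_gt0 ?(ltnW n_gt1).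
case: res {res_in} swap_size => [[S1 S2]|] swap_size /=; [have := swap_size S1 S2 erefl|];
  rewrite -sum_h in le_k *; clearbody h1 h2; lia.
Qed.

Theorem lemma2 :
  exists C N : nat,
    forall (R : realDomainType) (n k : nat) (p : nat -> R) (sched rnd : nat -> bool),
      N <= n -> 1 <= k ->
      (forall j, j < n -> (0 < p j)%R) ->
      (kswap_run n k p sched rnd).2 <= C * k * n ^ uphalf k * trunc_log 2 n.
Proof.
exists 100, 2 => R n k p sched rnd n_gt1 k_gt0 _.
have le_e : n ^ k./2 <= 2 ^ ((trunc_log 2 n).+1 * k./2).
  by rewrite expnM leq_exp2rW // ltnW // trunc_log_ltn.
apply: leq_trans (kswap_run_cost p sched rnd n_gt1 k_gt0 le_e) _.
have t_gt0 : 0 < trunc_log 2 n by rewrite trunc_log_gt0.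
have le_half : 2 * k./2 <= k by rewrite mul2n -{2}(odd_double_half k) leq_addl.
move: (trunc_log 2 n) (k./2) (n ^ uphalf k) t_gt0 le_half => t h P t_gt0 le_half.
have le_kt : k + t.+1 * h <= 2 * (k * t) by nia.
have -> : 100 * k * P * t = 50 * (2 * (k * t)) * P by lia.
exact: leq_mul (leq_mul (leqnn 50) le_kt) (leqnn P).
Qed.
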